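(* Let $\mathcal{T}$ be an MPQ-tree of an interval graph $G=(V,E)$, let $(x,y)\in E$ with $x$ over $y$ and $node(x)\neq node(y)$, and suppose the $\langle x,y\rangle$-tree-path starts in a central section $S_a$ of the Q-node $node(x)$. If there is a vertex $q\in S_a\setminus(S_{l(x)}\cup S_{r(x)})$, then $(x,y)$ is not an interval edge.
   Context: Graphs are finite and simple; for $G=(V,E)$ and $e\in E$, $G-e=(V,E\setminus\{e\})$. An edge $(x,y)\in E$ of an interval graph $G$ is an interval edge if $G-(x,y)$ is an interval graph. An MPQ-tree of an interval graph $G=(V,E)$, $V=\{1,\dots,n\}$, is a rooted plane tree whose nodes are P-nodes and Q-nodes. Each P-node carries a (possibly empty) set of vertices. A Q-node has $k\ge 3$ ordered positions $1,\dots,k$; position $i$ carries a set $S_i\subseteq V$ (the $i$-th section) and a child subtree $T_i$, which may be empty. Every vertex $v$ is assigned to exactly one node $node(v)$: either $v$ lies in the set of the P-node $node(v)$, or $node(v)$ is a Q-node and $v$ lies exactly in the sections $S_{l(v)},\dots,S_{r(v)}$ of it, with $l(v)<r(v)$. For a node with child subtrees $T_1,\dots,T_k$, $V_i$ denotes the set of vertices assigned to nodes of $T_i$ ($V_i=\emptyset$ if $T_i$ is empty). The maximal cliques of $G$ are in bijection with the descending paths from the root which at a P-node continue into one of its children (stopping if there is none) and at a Q-node choose a position $i$ and continue into $T_i$ (stopping if $T_i$ is empty); the clique is the union of the sets of the visited P-nodes and the chosen sections. Reading these cliques left to right gives a linear order of the maximal cliques, and the orders obtained this way after arbitrarily permuting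 children of P-nodes and reversing the positions of Q-nodes are exactly the orders of the maximal cliques of $G$ in which the cliques containing any fixed vertex are consecutive. Moreover, for every Q-node with sections $S_1,\dots,S_k$: (a) $V_1\neq\emptyset$ and $V_k\ne\emptyset$; (b) $S_1\subseteq S_2$ and $S_k\subseteq S_{k-1}$; (c) $S_{i-1}\cap S_i\neq\emptyset$ for $2\le i\le k$; (d) $S_{i-1}\neq S_i$ for $2\le i\le k$; (e) $(S_i\cap S_{i+1})\setminus S_1\neq\emptyset$ and $(S_{i-1}\cap S_i)\setminus S_k\neq\emptyset$ for $2\le i\le k-1$; (f) $(S_{i-1}\cup V_{i-1})\setminus S_i\neq\emptyset$ and $(S_i\cup V_i)\setminus S_{i-1}\neq\emptyset$ for $2\le i\le k$; and further (g) no empty P-node has an empty P-node as its parent, (h) no P-node has exactly one child whose root is a P-node, (i) every child subtree of a P-node is nonempty. We say $x$ is over $y$ if $node(x)$ is the lowest common ancestor of $node(x)$ and $node(y)$ in $\mathcal{T}$. For $x$ over $y$ with $node(x)\ne node(y)$, the $\langle x,y\rangle$-tree-path is the tree path $node(x)=n_1,n_2,\dots,n_t=node(y)$. It starts in a central section $S_a$ if $n_1$ is a Q-node and $n_2$ lies in the subtree $T_a$ of $n_1$ with $l(x)<a<r(x)$. *)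

From Stdlib Require Import Permutation.
From Stdlib Require List.
From mathcomp Require Import all_boot.

Set Implicit Arguments.
Unset Strict Implicit.
Unset Printing Implicit Defensive.

Definition clique (T : finType) (e : rel T) (K : {set T}) : Prop :=
  forall u v, u \in K -> v \in K -> u != v -> e u v.

Definition max_clique (T : finType) (e : rel T) (K : {set T}) : Prop :=
  clique e K /\ forall K', clique e K' -> K \subset K' -> K' = K.

(* Interval graph: vertices are (closed, integer-endpoint) intervals,
   adjacency = distinct vertices with intersecting intervals.  For finite
   graphs this is equivalent to real intervals. *)
Definition interval_graph (T : finType) (e : rel T) : Prop :=
  exists lo hi : T -> nat,
    (forall v, lo v <= hi v) /\
    forall u v, e u v <-> (u != v /\ maxn (lo u) (lo v) <= minn (hi u) (hi v)).

Definition remove_edge (T : finType) (e : rel T) (x y : T) : rel T :=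
  fun u v => e u v && ~~ (((u == x) && (v == y)) || ((u == y) && (v == x))).

(* A P-node carries a set and a list of (nonempty) child subtrees; a Q-node
   carries its positions in order: section S_i and optional child T_i
   (None = empty subtree).  Positions are 0-based: paper position i is
   index i-1 here. *)
Inductive mpq (T : finType) : Type :=
| PN : {set T} -> seq (mpq T) -> mpq T
| QN : seq ({set T} * option (mpq T)) -> mpq T.

Arguments PN {T}.
Arguments QN {T}.

Section MPQ.
Variable T : finType.

Definition sec (secs : seq ({set T} * option (mpq T))) (i : nat) : {set T} :=
  (nth (set0, None) secs i).1.

(* The maximal cliques read left to right (the canonical order). *)
Fixpoint leaves (t : mpq T) : seq {set T} :=
  match t with
  | PN Sx cs =>
      if cs is [::] then [:: Sx]
      else flatten (map (fun c => map (setU Sx) (leaves c)) cs)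
  | QN secs =>
      flatten (map (fun p => match p.2 with
                             | None => [:: p.1]
                             | Some c => map (setU p.1) (leaves c)
                             end) secs)
  end.

Definition p_orders (Sx : {set T}) (Ps : seq (seq {set T} -> Prop))
    (s : seq {set T}) : Prop :=
  exists Ps' ss, Permutation Ps Ps' /\ List.Forall2 (fun P x => P x) Ps' ss /\
    s = flatten (map (map (setU Sx)) ss).

Definition q_orders (Qs : seq (seq {set T} -> Prop)) (s : seq {set T}) : Prop :=
  exists ss, List.Forall2 (fun P x => P x) Qs ss /\
    (s = flatten ss \/ s = flatten (rev ss)).

(* is_order t s : s is a clique order obtained from t by permuting children
   of P-nodes and reversing Q-nodes (arbitrarily, throughout the tree). *)
Fixpoint is_order (t : mpq T) : seq {set T} -> Prop :=
  match t with
  | PN Sx cs =>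
      if cs is [::] then fun s => s = [:: Sx]
      else p_orders Sx (map is_order cs)
  | QN secs =>
      q_orders (map (fun p => match p.2 with
                              | None => fun s => s = [:: p.1]
                              | Some c => fun s =>
                                  exists s', is_order c s' /\ s = map (setU p.1) s'
                              end) secs)
  end.

Fixpoint subtree (t : mpq T) (a : seq nat) : option (mpq T) :=
  match a with
  | [::] => Some t
  | i :: a' =>
      match t with
      | PN _ cs => if i < size cs then subtree (nth t cs i) a' else None
      | QN secs => if (nth (set0, None) secs i).2 is Some c
                   then subtree c a' else None
      end
  end.

(* v is assigned to (occurs at) the node with address a *)
Definition occ (t : mpq T) (a : seq nat) (v : T) : Prop :=
  match subtree t a with
  | Some (PN Sx _) => v \in Sx
  | Some (QN secs) => has (fun p : {set T} * option (mpq T) => v \in p.1) secs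
  | None => False
  end.

Definition Vsub (t : mpq T) (b : seq nat) (i : nat) (v : T) : Prop :=
  exists rest, occ t (b ++ i :: rest) v.

Definition consec (s : seq {set T}) : Prop :=
  forall v i j k, i <= j -> j <= k -> k < size s ->
    v \in nth set0 s i -> v \in nth set0 s k -> v \in nth set0 s j.

Definition Qnode_ok (t : mpq T) (b : seq nat)
    (secs : seq ({set T} * option (mpq T))) : Prop :=
  let k := size secs in
  let Sx := sec secs in
  [/\ 3 <= k,
      forall v, has (fun p : {set T} * option (mpq T) => v \in p.1) secs ->
        exists l r, [/\ l < r, r < k &
          forall i, i < k -> (v \in Sx i <-> l <= i <= r)],
      (exists v, Vsub t b 0 v) /\ (exists v, Vsub t b k.-1 v),
      Sx 0 \subset Sx 1 /\ Sx k.-1 \subset Sx k.-2 &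
      forall i, 1 <= i -> i < k ->
        [/\ Sx i.-1 :&: Sx i != set0,
            Sx i.-1 != Sx i,
            (i < k.-1 ->
               (Sx i :&: Sx i.+1) :\: Sx 0 != set0 /\
               (Sx i.-1 :&: Sx i) :\: Sx k.-1 != set0) &
            (exists v, (v \in Sx i.-1 \/ Vsub t b i.-1 v) /\ v \notin Sx i) /\
            (exists v, (v \in Sx i \/ Vsub t b i v) /\ v \notin Sx i.-1)]].

Definition Pnode_ok (t : mpq T) (b : seq nat) (Sx : {set T}) (cs : seq (mpq T))
    : Prop :=
  [/\ (Sx = set0 -> forall c Sx' cs',
          subtree t (b ++ [:: c]) = Some (PN Sx' cs') -> Sx' != set0),
      ~ (exists Sx' cs', cs = [:: PN Sx' cs']) &
      forall c, c < size cs -> exists v, Vsub t b c v].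

Definition is_MPQ_tree (e : rel T) (t : mpq T) : Prop :=
  [/\
      forall v, exists! a, occ t a v,
      forall b secs, subtree t b = Some (QN secs) -> Qnode_ok t b secs,
      forall b Sx cs, subtree t b = Some (PN Sx cs) -> Pnode_ok t b Sx cs,
      uniq (leaves t) /\ (forall K, K \in leaves t <-> max_clique e K) &
      forall s, is_order t s <->
        [/\ uniq s, (forall K, K \in s <-> max_clique e K) & consec s]].

End MPQ.

From Stdlib Require Import Permutation.
From Stdlib Require List.
From mathcomp Require Import all_boot zify.

(* Suppose G - xy had an interval model; reflecting it if necessary, the interval
   of y lies to the left of that of x.  For a maximal clique K of G, dropping x from
   K when y is in K leaves a clique of G - xy, whose intervals have a rightmost
   common point p(K).  Every maximal clique containing y contains S_a, hence x and q,
   and every maximal clique containing q contains x; with this one checks that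
   sorting the maximal cliques by p keeps the cliques through any vertex
   consecutive.  So this order is produced by the MPQ-tree, and it lists the
   sections of node(x) in their order or reversed.  Since q spans at least two
   sections strictly between l(x) and r(x), some section S_j with j <> a contains q;
   its cliques K satisfy p(K) <= hi(q).  A clique K of section l(x) or r(x) contains
   x but neither y nor q, so some w in K is not adjacent to q; as
   lo(q) <= hi(y) < lo(x) <= p(K) <= hi(w), the interval of w lies right of that of
   q, and p(K) > hi(q).  Whichever of the two end sections precedes S_j, this
   contradicts the monotonicity of p. *)

Set Implicit Arguments.
Unset Strict Implicit.
Unset Printing Implicit Defensive.

Lemma Permutation_perm_eq (A : eqType) (s1 s2 : seq A) :
  Permutation s1 s2 -> perm_eq s1 s2.
Proof.
elim=> [|x l1 l2 _|x y l|l1 l2 l3 _ IH12 _ IH23] //.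
- by rewrite perm_cons.
- by rewrite (perm_catCA [:: y] [:: x] l).
- exact: perm_trans IH12 IH23.
Qed.

Lemma perm_cat_cons_inv (A : eqType) (s1 s2 t1 t2 : seq A) x :
  perm_eq (s1 ++ x :: s2) (t1 ++ x :: t2) -> perm_eq (s1 ++ s2) (t1 ++ t2).
Proof.
rewrite -(cat1s x s2) -(cat1s x t2) (perm_catCA s1) perm_sym (perm_catCA t1).
by rewrite perm_cons perm_sym.
Qed.

Lemma Forall2_nth (A B : Type) (R : A -> B -> Prop) l1 l2 da db :
  List.Forall2 R l1 l2 ->
  size l1 = size l2 /\ forall i, i < size l1 -> R (nth da l1 i) (nth db l2 i).
Proof.
elim=> [|a b l1' l2' Rab _ [Hs IH]] //=; split=> [|[|i] //=]; first by rewrite Hs.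
exact: IH.
Qed.

Lemma nth_In (A : Type) (d : A) (l : seq A) i :
  i < size l -> List.In (nth d l i) l.
Proof. by elim: l i => //= c l IH [|i] /=; [left | right; apply: IH]. Qed.

Lemma mem_flatten_rev (A : eqType) (ss : seq (seq A)) :
  flatten (rev ss) =i flatten ss.
Proof.
by move=> z; apply/flattenP/flattenP => -[s0]; rewrite ?mem_rev => ? ?; exists s0;
  rewrite ?mem_rev.
Qed.

Lemma flatten_nth_split (A : Type) (ss : seq (seq A)) i : i < size ss ->
  flatten ss = flatten (take i ss) ++ nth [::] ss i ++ flatten (drop i.+1 ss).
Proof.
by move=> ?; rewrite -[in LHS](cat_take_drop i ss) (drop_nth [::]) // flatten_cat.
Qed.

Lemma flatten_rev_nth_split (A : Type) (ss : seq (seq A)) i : i < size ss ->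
  flatten (rev ss) =
  flatten (rev (drop i.+1 ss)) ++ nth [::] ss i ++ flatten (rev (take i ss)).
Proof.
move=> ?; rewrite -[in LHS](cat_take_drop i ss) (drop_nth [::]) //.
by rewrite rev_cat rev_cons cat_rcons !flatten_cat.
Qed.

Lemma mem_flatten_take_drop (A : eqType) (ss : seq (seq A)) i z :
  z \in flatten (take i ss) ++ flatten (drop i.+1 ss) ->
  exists2 m, (m < size ss) && (m != i) & z \in nth [::] ss m.
Proof.
rewrite mem_cat => /orP[] /flattenP[s0 /(nthP [::])[m Hm <-] Hz].
  rewrite size_take_min leq_min in Hm; case/andP: Hm => Hmi Hm.
  exists m; last by rewrite -(nth_take [::] Hmi).
  by rewrite Hm neq_ltn Hmi.
rewrite size_drop ltn_subRL in Hm; exists (i.+1 + m); last by rewrite -nth_drop.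
by rewrite Hm neq_ltn addSn ltnS leq_addr orbT.
Qed.

Lemma pairwise_flatten_nth (A : eqType) (r : rel A) (ss : seq (seq A)) i j u v :
  pairwise r (flatten ss) -> i < j < size ss ->
  u \in nth [::] ss i -> v \in nth [::] ss j -> r u v.
Proof.
move=> Hpw /andP[Hij Hj] Hu Hv.
have Hi : i < size ss by lia.
move: Hpw; rewrite (flatten_nth_split Hj) pairwise_cat => /and3P[/allrelP + _ _].
apply; last by rewrite mem_cat Hv.
apply/flattenP; exists (nth [::] ss i) => //.
by rewrite -(nth_take [::] Hij) mem_nth // size_take_min leq_min Hij.
Qed.

Lemma pairwise_flatten_rev_nth (A : eqType) (r : rel A) (ss : seq (seq A)) i j u v :
  pairwise r (flatten (rev ss)) -> i < j < size ss ->
  u \in nth [::] ss j -> v \in nth [::] ss i -> r u v.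
Proof.
move=> Hpw /andP[Hij Hj] Hu Hv; have Hi := ltn_trans Hij Hj.
apply: (pairwise_flatten_nth (i := size ss - j.+1) (j := size ss - i.+1) Hpw).
- by rewrite size_rev; apply/andP; split; lia.
- rewrite nth_rev; last lia.
  by have -> : size ss - (size ss - j.+1).+1 = j by lia.
- rewrite nth_rev; last lia.
  by have -> : size ss - (size ss - i.+1).+1 = i by lia.
Qed.

Lemma pairwise_cat_mid (A : Type) (r : rel A) (s1 s2 s3 : seq A) :
  pairwise r (s1 ++ s2 ++ s3) -> pairwise r s2.
Proof. by rewrite !pairwise_cat => /and3P[_ _ /and3P[]]. Qed.

(** * Clique orders of MPQ-trees *)

Section MpqInd.
Variables (T : finType) (P : mpq T -> Prop).
Hypothesis HP : forall Sx cs, (forall c, List.In c cs -> P c) -> P (PN Sx cs).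
Hypothesis HQ : forall secs,
  (forall S c, List.In (S, Some c) secs -> P c) -> P (QN secs).

Let P_child (p : {set T} * option (mpq T)) := if p.2 is Some c then P c else True.

Fixpoint mpq_ind_nested (t : mpq T) : P t :=
  match t with
  | PN Sx cs => @HP Sx cs (proj1 (List.Forall_forall P cs)
      ((fix all cs : List.Forall P cs :=
          if cs is c :: cs' then List.Forall_cons c (mpq_ind_nested c) (all cs')
          else List.Forall_nil P) cs))
  | QN secs => @HQ secs (fun S c => proj1 (List.Forall_forall P_child secs)
      ((fix all secs : List.Forall P_child secs :=
          if secs is p :: secs' then
            List.Forall_cons p
              (match p.2 as o return if o is Some c then P c else True with
               | Some c => mpq_ind_nested c
               | None => I
               end) (all secs')
          else List.Forall_nil P_child) secs) (S, Some c))
  end.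

End MpqInd.

Section Tree.
Variable T : finType.
Implicit Types (t c n : mpq T) (b : seq nat) (v : T) (K : {set T}) (s : seq {set T}).
Implicit Type secs : seq ({set T} * option (mpq T)).

Lemma subtree_cat t b1 b2 :
  subtree t (b1 ++ b2) = if subtree t b1 is Some n then subtree n b2 else None.
Proof.
elim: b1 t => //= i b1 IH [Sx cs|secs]; first by case: ifP.
by case: (nth _ secs i).2.
Qed.

Lemma occ_cat t n b1 b2 v :
  subtree t b1 = Some n -> occ t (b1 ++ b2) v = occ n b2 v.
Proof. by rewrite /occ subtree_cat => ->. Qed.

Lemma mem_sec_lt_size secs i v : v \in sec secs i -> i < size secs.
Proof.
by rewrite ltnNge; apply: contraTN; rewrite /sec => /(nth_default _) ->; rewrite inE.
Qed.

Lemma occ_QN_root secs i v : v \in sec secs i -> occ (QN secs) [::] v.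
Proof.
by move=> Hv; apply/(has_nthP (set0, None)); exists i; first exact: mem_sec_lt_size Hv.
Qed.

Definition sec_order (p : {set T} * option (mpq T)) : seq {set T} -> Prop :=
  match p.2 with
  | None => fun X => X = [:: p.1]
  | Some c => fun X => exists s', is_order c s' /\ X = map (setU p.1) s'
  end.

Lemma is_order_PN Sx cs s : 0 < size cs -> is_order (PN Sx cs) s ->
  exists ss_al ss, [/\ perm_eq ss ss_al, size ss_al = size cs,
    forall m, m < size cs -> is_order (nth (PN Sx cs) cs m) (nth [::] ss_al m) &
    s = flatten (map (map (setU Sx)) ss)].
Proof.
case: cs => // c0 cs _ [Ps [ss [HPs [HF ->]]]].
have [ss_al [Hperm HF']] := Permutation_Forall2 (Permutation_sym HPs) HF.
have [Hsz Hnth] := Forall2_nth (fun _ => True) [::] HF'.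
exists ss_al, ss; split; first exact: Permutation_perm_eq.
- by rewrite -Hsz size_map.
- by move=> m Hm; have := Hnth m; rewrite size_map (nth_map (PN Sx (c0 :: cs))) //; apply.
- by [].
Qed.

Lemma is_order_QN secs s : is_order (QN secs) s ->
  exists ss, [/\ size ss = size secs, s = flatten ss \/ s = flatten (rev ss) &
    forall m, m < size secs -> sec_order (nth (set0, None) secs m) (nth [::] ss m)].
Proof.
case=> ss [HF Hs]; have [Hsz Hnth] := Forall2_nth (fun _ => True) [::] HF.
exists ss; split=> //; first by rewrite -Hsz size_map.
by move=> m Hm; have := Hnth m; rewrite size_map (nth_map (set0, None)) //; apply.
Qed.

Lemma sec_order_sub p X K : sec_order p X -> K \in X -> p.1 \subset K.
Proof.
case: p => S [c|] /=; first by case=> s' [_ ->] /mapP[K0 _ ->]; exact: subsetUl.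
by move=> ->; rewrite inE => /eqP ->.
Qed.

Lemma order_occ c s K v : is_order c s -> K \in s -> v \in K -> exists b, occ c b v.
Proof.
elim/mpq_ind_nested: c s K => [Sx cs IH|secs IH] s K.
  case: (posnP (size cs)) => [/size0nil -> /= -> |Hcs].
    by rewrite inE => /eqP -> Hv; exists [::].
  case/(is_order_PN Hcs)=> ss_al [ss [Hperm Hsz Hord ->]].
  case/flattenP=> _ /mapP[s0 Hs0 ->] /mapP[K0 HK0 ->] /setUP[Hv|Hv].
    by exists [::].
  move: Hs0; rewrite (perm_mem Hperm) => /(nthP [::])[m Hm Es0].
  rewrite Hsz in Hm; rewrite -Es0 in HK0.
  have [b Hb] := IH _ (nth_In (PN Sx cs) Hm) _ _ (Hord m Hm) HK0 Hv.
  by exists (m :: b); rewrite /occ /= Hm.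
case/is_order_QN=> ss [Hsz Hs Hord] HK Hv.
have /flattenP[X /(nthP [::])[m Hm EX] HKm] : K \in flatten ss.
  by case: Hs HK => ->; rewrite ?mem_flatten_rev.
rewrite Hsz in Hm; have := Hord m Hm; rewrite -EX in HKm.
have [Hvs|Hvs] := boolP (v \in sec secs m); first by exists [::]; exact: occ_QN_root Hvs.
move: Hvs; rewrite /sec_order /sec; case E: (nth (set0, None) secs m) => [S [c|]] /= Hvs.
  case=> s' [Hs' EX']; move: HKm Hv; rewrite EX' => /mapP[K0 HK0 ->] /setUP[HvS|Hv].
    by rewrite HvS in Hvs.
  have HSc : List.In (S, Some c) secs by rewrite -E; exact: nth_In.
  have [b Hb] := IH _ _ HSc _ _ Hs' HK0 Hv.
  by exists (m :: b); rewrite /occ /= E.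
by move=> EX'; move: HKm Hv; rewrite EX' inE => /eqP ->; rewrite (negbTE Hvs).
Qed.

Lemma sec_order_occ secs i X K v :
  sec_order (nth (set0, None) secs i) X -> K \in X -> v \in K ->
  v \in sec secs i \/ exists b, occ (QN secs) (i :: b) v.
Proof.
rewrite /sec_order /sec; case E: (nth (set0, None) secs i) => [S [c|]] /=.
  case=> s' [Hs' ->] /mapP[K0 HK0 ->] /setUP[|Hv]; first by left.
  have [b Hb] := order_occ Hs' HK0 Hv.
  by right; exists b; rewrite /occ /= E.
by move=> -> /[!inE] /eqP -> Hv; left.
Qed.

Lemma order_leaves t : is_order t (leaves t).
Proof.
elim/mpq_ind_nested: t => [Sx cs IH|secs IH].
  case: cs IH => [|c0 cs] IH //=.
  exists (map (@is_order T) (c0 :: cs)), (map (@leaves T) (c0 :: cs)).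
  split; first exact: Permutation_refl.
  split; last by rewrite -map_comp.
  elim: (c0 :: cs) IH => [|c cs' IHcs] IH /=; constructor; first by apply: IH; left.
  by apply: IHcs => c' Hc'; apply: IH; right.
eexists; split; last by left.
elim: secs IH => [|[S [c|]] secs IHs] IH /=; constructor => //.
- by exists (leaves c); split => //; apply: (IH S c); left.
- by apply: IHs => S' c' H; apply: (IH S' c'); right.
- by apply: IHs => S' c' H; apply: (IH S' c'); right.
Qed.

Lemma sec_order_nonempty p X :
  (forall c, p.2 = Some c -> forall s', is_order c s' -> s' != [::]) ->
  sec_order p X -> X != [::].
Proof.
rewrite /sec_order; case: p => S [c|] Hc /=; last by move=> ->.
by case=> s' [Hs' ->]; rewrite -size_eq0 size_map size_eq0; exact: Hc.
Qed.

Lemma order_nonempty t s :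
  (forall b secs, subtree t b = Some (QN secs) -> 0 < size secs) ->
  is_order t s -> s != [::].
Proof.
elim/mpq_ind_nested: t s => [Sx cs IH|secs IH] s Hsecs.
  case: (posnP (size cs)) => [/size0nil -> /= -> //|Hcs].
  case/(is_order_PN Hcs)=> ss_al [ss [Hperm Hsz Hord ->]].
  have Hne : nth [::] ss_al 0 != [::].
    apply: (IH _ (nth_In (PN Sx cs) Hcs)) (Hord 0 Hcs).
    by move=> b secs Hb; apply: (Hsecs (0 :: b)); rewrite /= Hcs.
  have : nth [::] ss_al 0 \in ss by rewrite (perm_mem Hperm) mem_nth ?Hsz.
  case: (nth [::] ss_al 0) Hne => // K0 X _ HX.
  have : Sx :|: K0 \in flatten (map (map (setU Sx)) ss).
    by apply/flattenP; exists (map (setU Sx) (K0 :: X)); rewrite ?map_f ?mem_head.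
  by case: (flatten _).
case/is_order_QN=> ss [Hsz Hs Hord].
have Hpos := Hsecs [::] secs erefl.
have : nth [::] ss 0 != [::].
  apply: sec_order_nonempty (Hord 0 Hpos) => c Ec s' Hs'.
  have HSc : List.In ((nth (set0, None) secs 0).1, Some c) secs.
    by rewrite -Ec -surjective_pairing; exact: nth_In.
  apply: (IH _ _ HSc _ _ Hs') => b secs' Hb.
  by apply: (Hsecs (0 :: b)); rewrite /= Ec.
have : nth [::] ss 0 \in ss by rewrite mem_nth ?Hsz.
case: (nth [::] ss 0) => // K0 X HX _.
have HK0 : K0 \in flatten ss by apply/flattenP; exists (K0 :: X); rewrite ?mem_head.
have : K0 \in s by case: Hs => ->; rewrite ?mem_flatten_rev.
by case: (s).
Qed.

Definition outside t b v := exists b0, occ t b0 v /\ ~~ prefix b b0.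

Lemma outside_root t i b v : occ t [::] v -> outside t (i :: b) v.
Proof. by exists [::]. Qed.

Lemma outside_below t i m b b0 v : occ t (m :: b0) v -> m != i -> outside t (i :: b) v.
Proof. by move=> Hv Hm; exists (m :: b0); rewrite prefix_cons eq_sym (negbTE Hm). Qed.

Lemma outside_cons t i b v : outside t [:: i] v -> outside t (i :: b) v.
Proof.
case=> b0 [Hb0 Hp]; exists b0; split=> //.
by apply: contra Hp; exact: (@catl_prefix _ [:: i] b0 b).
Qed.

Lemma outside_child t i c b v :
  subtree t [:: i] = Some c -> outside c b v -> outside t (i :: b) v.
Proof.
move=> Hc [b0 [Hb0 Hp]]; exists (i :: b0).
by rewrite (occ_cat _ _ Hc) prefix_cons eqxx.
Qed.

Lemma order_PN_child_split Sx cs i s : i < size cs -> is_order (PN Sx cs) s ->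
  exists pre post s', [/\ s = pre ++ map (setU Sx) s' ++ post,
    is_order (nth (PN Sx cs) cs i) s' &
    forall K v, K \in pre ++ post -> v \in K -> outside (PN Sx cs) [:: i] v].
Proof.
move=> Hi Hs.
have [ss_al [ss [Hperm Hsz Hord Es]]] := is_order_PN (leq_ltn_trans (leq0n i) Hi) Hs.
have Hsc : nth [::] ss_al i \in ss by rewrite (perm_mem Hperm) mem_nth ?Hsz.
case/splitPr: Hsc Hperm Es => ss1 ss2 Hperm ->.
have Hrest : perm_eq (ss1 ++ ss2) (take i ss_al ++ drop i.+1 ss_al).
  apply: (perm_cat_cons_inv (x := nth [::] ss_al i)).
  by rewrite -(drop_nth [::]) ?Hsz // cat_take_drop.
exists (flatten (map (map (setU Sx)) ss1)), (flatten (map (map (setU Sx)) ss2)),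
  (nth [::] ss_al i).
split; [by rewrite map_cat flatten_cat | exact: Hord |].
move=> K v; rewrite -flatten_cat -map_cat.
case/flattenP=> _ /mapP[s0 Hs0 ->] /mapP[K0 HK0 ->] /setUP[Hv|Hv].
  exact: outside_root.
have : K0 \in flatten (take i ss_al) ++ flatten (drop i.+1 ss_al).
  by rewrite -flatten_cat; apply/flattenP; exists s0; rewrite -?(perm_mem Hrest).
case/mem_flatten_take_drop=> m /andP[Hm Hmi] HK0m; rewrite Hsz in Hm.
have [b Hb] := order_occ (Hord m Hm) HK0m Hv.
have Hb' : occ (PN Sx cs) (m :: b) v by rewrite /occ /= Hm.
exact: outside_below Hb' Hmi.
Qed.

Lemma child_index_lt_size secs i c :
  (nth (set0, None) secs i).2 = Some c -> i < size secs.
Proof. by rewrite ltnNge; apply: contraPN => /(nth_default _) ->. Qed.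

Lemma order_QN_child_split secs i c s :
  (nth (set0, None) secs i).2 = Some c -> is_order (QN secs) s ->
  exists pre post s', [/\ s = pre ++ map (setU (sec secs i)) s' ++ post,
    is_order c s' &
    forall K v, K \in pre ++ post -> v \in K -> outside (QN secs) [:: i] v].
Proof.
move=> Ec /is_order_QN[ss [Hsz Hs Hord]].
have Hi := child_index_lt_size Ec.
have Hi' : i < size ss by rewrite Hsz.
have := Hord i Hi; rewrite /sec_order Ec => -[s' [Hs' Ei]].
have Hother K v : K \in flatten (take i ss) ++ flatten (drop i.+1 ss) -> v \in K ->
    outside (QN secs) [:: i] v.
  case/mem_flatten_take_drop=> m /andP[Hm Hmi] HKm Hv; rewrite Hsz in Hm.
  case: (sec_order_occ (Hord m Hm) HKm Hv) => [Hvm|[b Hb]].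
    exact/outside_root/(occ_QN_root Hvm).
  exact: outside_below Hb Hmi.
case: Hs => ->.
  exists (flatten (take i ss)), (flatten (drop i.+1 ss)), s'.
  by split=> //; rewrite (flatten_nth_split Hi') Ei.
exists (flatten (rev (drop i.+1 ss))), (flatten (rev (take i ss))), s'.
split=> //; first by rewrite (flatten_rev_nth_split Hi') Ei.
by move=> K v; rewrite !mem_cat !mem_flatten_rev orbC -mem_cat; exact: Hother.
Qed.

Lemma order_child_split t i c s : subtree t [:: i] = Some c -> is_order t s ->
  exists pre post A s', [/\ s = pre ++ map (setU A) s' ++ post, is_order c s',
    forall v, v \in A -> occ t [::] v &
    forall K v, K \in pre ++ post -> v \in K -> outside t [:: i] v].
Proof.
case: t => [Sx cs|secs] /=.
  case: ifP => // Hi [<-] /(order_PN_child_split Hi)[pre [post [s' [Es Hs' Hout]]]].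
  by exists pre, post, Sx, s'.
case Ec: (nth _ secs i).2 => [c'|] // [<-].
case/(order_QN_child_split Ec)=> pre [post [s' [Es Hs' Hout]]].
exists pre, post, (sec secs i), s'; split=> // v Hv.
exact: occ_QN_root Hv.
Qed.

Lemma order_subtree_split t b n s : subtree t b = Some n -> is_order t s ->
  exists pre post A s', [/\ s = pre ++ map (setU A) s' ++ post, is_order n s',
    forall v, v \in A -> outside t b v &
    forall K v, K \in pre ++ post -> v \in K -> outside t b v].
Proof.
elim: b t s => [|i b IH] t s.
  case=> <- Hs; exists [::], [::], set0, s; split=> //.
    by rewrite /= cats0 map_id_in // => K _; rewrite set0U.
  by move=> v; rewrite inE.
rewrite -(cat1s i b) subtree_cat; case Hc: (subtree t [:: i]) => [c|] // Hn Hs.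
have [pre1 [post1 [A1 [s1 [Es Hs1 HA1 Hout1]]]]] := order_child_split Hc Hs.
have [pre2 [post2 [A2 [s' [Es1 Hs' HA2 Hout2]]]]] := IH _ _ Hn Hs1.
exists (pre1 ++ map (setU A1) pre2), (map (setU A1) post2 ++ post1), (A1 :|: A2), s'.
split=> //.
- rewrite Es Es1 !map_cat -!catA -map_comp; do 3 congr (_ ++ _).
  by apply: eq_map => K /=; rewrite setUA.
- move=> v /setUP[/HA1 Hv|/HA2 Hv]; [exact: outside_root | exact: outside_child Hc Hv].
have Hinner K v : K \in pre2 ++ post2 -> v \in A1 :|: K -> outside t (i :: b) v.
  move=> HK /setUP[/HA1 Hv|Hv]; first exact: outside_root.
  exact: outside_child Hc (Hout2 K v HK Hv).
move=> K v; rewrite !mem_cat -!orbA => /or4P[HK|/mapP[K' HK' ->]|/mapP[K' HK' ->]|HK] Hv.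
- by apply: outside_cons (Hout1 K v _ Hv); rewrite mem_cat HK.
- by apply: Hinner Hv; rewrite mem_cat HK'.
- by apply: Hinner Hv; rewrite mem_cat HK' orbT.
- by apply: outside_cons (Hout1 K v _ Hv); rewrite mem_cat HK orbT.
Qed.

End Tree.

(** * Maximal cliques and interval models *)

Section Cliques.
Variables (T : finType) (e : rel T).
Hypothesis e_sym : symmetric e.
Implicit Types (u v w : T) (K C : {set T}).

Definition cliqueb C :=
  [forall u, forall v, (u \in C) ==> (v \in C) ==> (u != v) ==> e u v].

Lemma cliqueP C : reflect (clique e C) (cliqueb C).
Proof.
apply: (iffP forallP) => [H u v Hu Hv Huv|H u].
  by have := forallP (H u) v; rewrite Hu Hv Huv.
by apply/forallP => v; apply/implyP => Hu; apply/implyP => Hv; apply/implyP; apply: H.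
Qed.

Lemma max_clique_exists C : clique e C -> exists K, max_clique e K /\ C \subset K.
Proof.
move=> HC; have PC : cliqueb C && (C \subset C) by rewrite subxx andbT; apply/cliqueP.
case: (@arg_maxnP _ C (fun K => cliqueb K && (C \subset K)) (fun K => #|K|) PC).
move=> K /andP[/cliqueP HK HCK] Kmax.
exists K; split=> //; split=> // K' HK' HKK'.
apply/eqP; rewrite eq_sym eqEcard HKK' /=; apply: Kmax.
by rewrite (subset_trans HCK HKK') andbT; apply/cliqueP.
Qed.

Lemma max_clique_adj K v :
  max_clique e K -> (forall w, w \in K -> w != v -> e v w) -> v \in K.
Proof.
move=> [HK Kmax] Hv.
have HvK : clique e (v |: K).
  move=> u w /setU1P[->|Hu] /setU1P[->|Hw] Huw.
  - by rewrite eqxx in Huw.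
  - by apply: Hv; rewrite // eq_sym.
  - by rewrite e_sym; apply: Hv.
  - exact: HK.
by rewrite -(Kmax _ HvK (subsetUr _ _)) setU11.
Qed.

Lemma max_clique_nonadj K v :
  max_clique e K -> v \notin K -> exists w, [/\ w \in K, w != v & ~~ e v w].
Proof.
move=> HK HvK.
have [/existsP[w /and3P[Hw Hwv Hvw]]|/existsPn Hnone] :=
  boolP [exists w, [&& w \in K, w != v & ~~ e v w]]; first by exists w.
case/negP: HvK; apply: max_clique_adj => // w Hw Hwv.
by have := Hnone w; rewrite Hw Hwv negbK.
Qed.

Lemma edge_max_clique u v : e u v -> exists K, [/\ max_clique e K, u \in K & v \in K].
Proof.
move=> Huv; have [|K [HK /subsetP HuvK]] := max_clique_exists (C := [set u; v]).
  move=> a b /set2P[]-> /set2P[]->; rewrite ?eqxx // => _; by rewrite e_sym.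
by exists K; split=> //; apply: HuvK; rewrite !inE eqxx ?orbT.
Qed.

End Cliques.

Section IntervalModels.
Variable T : finType.
Implicit Types (r : rel T) (lo hi : T -> nat).

Definition interval_model r lo hi :=
  (forall v, lo v <= hi v) /\
  forall u v, r u v <-> [/\ u != v, lo u <= hi v & lo v <= hi u].

Lemma interval_graph_model r : interval_graph r -> exists lo hi, interval_model r lo hi.
Proof.
case=> lo [hi [Hlh Hr]]; exists lo, hi; split=> // u v; rewrite Hr.
have Hu := Hlh u; have Hv := Hlh v.
by split=> [[? ?]|[? ? ?]]; split=> //; lia.
Qed.

Lemma interval_model_sym r lo hi : interval_model r lo hi -> symmetric r.
Proof.
by move=> [_ Hr] u v; apply/idP/idP => /Hr[? ? ?]; apply/Hr; split; rewrite // eq_sym.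
Qed.

Lemma interval_model_irrefl r lo hi : interval_model r lo hi -> irreflexive r.
Proof. by move=> [_ Hr] u; apply/negbTE/negP => /Hr[]; rewrite eqxx. Qed.

Lemma interval_model_mirror r lo hi N : (forall v, hi v <= N) ->
  interval_model r lo hi -> interval_model r (fun v => N - hi v) (fun v => N - lo v).
Proof.
move=> HN [Hlh Hr]; split=> [v|u v]; first by have := Hlh v; lia.
have Hu := Hlh u; have Hv := Hlh v; have Nu := HN u; have Nv := HN v.
by rewrite Hr; split=> -[? ? ?]; split=> //; lia.
Qed.

Lemma interval_model_ordered r x y : interval_graph r -> x != y -> ~~ r x y ->
  exists lo hi, interval_model r lo hi /\ hi y < lo x.
Proof.
move=> /interval_graph_model[lo [hi Hmod]] Hxy Hnxy.
have Hsep : hi y < lo x \/ hi x < lo y.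
  case: (leqP (lo x) (hi y)); last by left.
  case: (leqP (lo y) (hi x)) => [H2 H1|]; last by right.
  by case/negP: Hnxy; apply/(Hmod.2 x y).
case: Hsep => Hsep; first by exists lo, hi.
pose N := \max_v hi v; have HN v : hi v <= N by exact: leq_bigmax.
exists (fun v => N - hi v), (fun v => N - lo v).
split; first exact: interval_model_mirror.
by have := Hmod.1 y; have := HN y; lia.
Qed.

End IntervalModels.

(** * Clique orders around a Q-node *)

Section Qnode.
Variables (T : finType) (e : rel T) (t : mpq T) (ax : seq nat)
  (secs : seq ({set T} * option (mpq T))).
Hypotheses (Ht : is_MPQ_tree e t) (Hsub : subtree t ax = Some (QN secs)).
Implicit Types (v : T) (K : {set T}) (s : seq {set T}) (b : seq nat).

Lemma occ_unique v b1 b2 : occ t b1 v -> occ t b2 v -> b1 = b2.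
Proof.
case: Ht => Hocc _ _ _ _ H1 H2; have [b0 [_ Hb0]] := Hocc v.
by rewrite -(Hb0 b1) // -(Hb0 b2).
Qed.

Lemma inside_not_outside v b : occ t b v -> prefix ax b -> ~ outside t ax v.
Proof. by move=> Hb Hpre [b0 [Hb0]]; rewrite (occ_unique Hb0 Hb) Hpre. Qed.

Lemma occ_sec v i : v \in sec secs i -> occ t ax v.
Proof. by move=> Hv; rewrite -[ax]cats0 (occ_cat _ _ Hsub); exact: occ_QN_root Hv. Qed.

(* The cliques read off position i of node(x): they contain S_i, and their
   vertices assigned inside the subtree of node(x) lie in S_i or below T_i. *)
Definition clique_at i K :=
  sec secs i \subset K /\
  forall v b, occ t b v -> prefix ax b -> v \in K ->
    v \in sec secs i \/ exists b0, occ t (ax ++ i :: b0) v.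

Lemma qnode_order_blocks s : is_order t s ->
  exists pre post blocks,
  [/\ s = pre ++ flatten blocks ++ post \/ s = pre ++ flatten (rev blocks) ++ post,
      size blocks = size secs,
      forall K v, K \in pre ++ post -> v \in K -> outside t ax v &
      forall i, i < size secs ->
        nth [::] blocks i != [::] /\ forall K, K \in nth [::] blocks i -> clique_at i K].
Proof.
move=> Hs; have [pre [post [A [s' [Es Hs' HA Hout]]]]] := order_subtree_split Hsub Hs.
have [ss [Hsz Ess Hord]] := is_order_QN Hs'.
have Hqsize b secs' : subtree t b = Some (QN secs') -> 0 < size secs'.
  by case: Ht => _ HQ _ _ _ /HQ[]; case: (size secs').
exists pre, post, (map (map (setU A)) ss); split=> //.
- by rewrite Es -map_rev -!map_flatten; case: Ess => ->; [left | right].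
- by rewrite size_map.
move=> i Hi; rewrite (nth_map [::]) ?Hsz // -size_eq0 size_map size_eq0; split.
  apply: sec_order_nonempty (Hord i Hi) => c Ec s2; apply: order_nonempty => b secs' Hb.
  by apply: (Hqsize (ax ++ i :: b)); rewrite subtree_cat Hsub /= Ec.
move=> _ /mapP[K0 HK0 ->]; split.
  exact: subset_trans (sec_order_sub (Hord i Hi) HK0) (subsetUr _ _).
move=> v b Hb Hpre /setUP[/HA Hv|Hv]; first by case: (inside_not_outside Hb Hpre).
case: (sec_order_occ (Hord i Hi) HK0 Hv) => [|[b0 Hb0]]; first by left.
by right; exists b0; rewrite (occ_cat _ _ Hsub).
Qed.

Lemma max_clique_at K v b : max_clique e K -> v \in K -> occ t b v -> prefix ax b ->
  exists2 i, i < size secs & clique_at i K.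
Proof.
move=> HK Hv Hb Hpre; have HKt : K \in leaves t by case: Ht => _ _ _ [_ ->].
have [pre [post [blocks [Es Hsz Hout Hblocks]]]] := qnode_order_blocks (order_leaves t).
have Hin : K \in flatten blocks.
  move: HKt; case: Es => ->; rewrite !mem_cat ?mem_flatten_rev => /or3P[HK'|//|HK'];
    by case: (inside_not_outside Hb Hpre); apply: (Hout K); rewrite // mem_cat HK' ?orbT.
case/flattenP: Hin => X /(nthP [::])[i Hi EX] HKX; rewrite Hsz in Hi.
by exists i => //; apply: (Hblocks i Hi).2; rewrite EX.
Qed.

End Qnode.

Section CentralSection.
Variables (T : finType) (e : rel T) (t : mpq T) (x y q : T) (ax rest : seq nat)
  (secs : seq ({set T} * option (mpq T))) (a lx rx : nat).
Hypotheses (e_sym : symmetric e) (Ht : is_MPQ_tree e t) (Exy : e x y)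
  (Hsub : subtree t ax = Some (QN secs)) (Hrx : rx < size secs)
  (Hx : forall i, i < size secs -> (x \in sec secs i <-> lx <= i <= rx))
  (Hyocc : occ t (ax ++ a :: rest) y) (Ha : lx < a < rx)
  (Hqa : q \in sec secs a) (Hqlx : q \notin sec secs lx) (Hqrx : q \notin sec secs rx).
Implicit Type K : {set T}.

Lemma a_lt_size : a < size secs.
Proof. by case/andP: Ha => _ Har; exact: ltn_trans Har Hrx. Qed.

Lemma x_in_sec i : lx <= i <= rx -> x \in sec secs i.
Proof. by case/andP=> Hl Hr; apply/Hx; [exact: leq_ltn_trans Hr Hrx | rewrite Hl]. Qed.

Lemma q_span : exists l r, [/\ l < r, lx < l <= a, a <= r < rx &
  forall i, i < size secs -> (q \in sec secs i <-> l <= i <= r)].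
Proof.
have Hqsec : has (fun p : {set T} * option (mpq T) => q \in p.1) secs.
  by apply/(has_nthP (set0, None)); exists a; [exact: a_lt_size | exact: Hqa].
case: Ht => _ HQ _ _ _; case: (HQ _ _ Hsub) => _ /(_ q Hqsec)[l [r [Hlr _ Hq]]] _ _ _.
have Hlx : lx < size secs by case/andP: Ha => ? ?; lia.
have /andP[Hla Har] := (Hq a a_lt_size).1 Hqa.
have Hl : ~~ (l <= lx <= r) by apply: contra Hqlx => /(Hq lx Hlx).2.
have Hr : ~~ (l <= rx <= r) by apply: contra Hqrx => /(Hq rx Hrx).2.
exists l, r; split=> //; apply/andP; split=> //; case/andP: Ha => ? ?; lia.
Qed.

Lemma clique_at_y i K : clique_at t ax secs i K -> y \in K -> i = a.
Proof.
case=> _ Hvert /(Hvert y _ Hyocc (prefix_prefix _ _))[Hyi|[b0 Hb0]].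
  move: (occ_unique Ht (occ_sec Hsub Hyi) Hyocc) => /(congr1 size).
  by rewrite size_cat /=; lia.
move: (occ_unique Ht Hb0 Hyocc) => /(congr1 (drop (size ax))).
by rewrite !drop_size_cat // => -[].
Qed.

Lemma occ_q : occ t ax q.
Proof. exact: (occ_sec Hsub Hqa). Qed.

Lemma clique_at_q i K : clique_at t ax secs i K -> q \in K -> q \in sec secs i.
Proof.
case=> _ Hvert /(Hvert q _ occ_q (prefix_refl _))[//|[b0 /(occ_unique Ht occ_q)]].
by move/(congr1 size); rewrite size_cat /=; lia.
Qed.

Lemma max_clique_y K : max_clique e K -> y \in K -> x \in K /\ q \in K.
Proof.
move=> HK Hy; have [i _ HKi] := max_clique_at Ht Hsub HK Hy Hyocc (prefix_prefix _ _).
have Eia := clique_at_y HKi Hy; subst i; case: HKi => /subsetP HaK _.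
by split; apply: HaK => //; apply: x_in_sec; case/andP: Ha => ? ?; lia.
Qed.

Lemma max_clique_q K : max_clique e K -> q \in K -> x \in K.
Proof.
move=> HK Hq; have [i Hi HKi] := max_clique_at Ht Hsub HK Hq occ_q (prefix_refl _).
have [l [r [_ /andP[Hl _] /andP[_ Hr] Hspan]]] := q_span.
have /(Hspan i Hi)/andP[Hli Hir] := clique_at_q HKi Hq.
case: HKi => /subsetP HiK _; apply: HiK; apply: x_in_sec; lia.
Qed.

Lemma occ_x : occ t ax x.
Proof.
have Hlx : lx <= lx <= rx by case/andP: Ha => ? ?; lia.
exact: (occ_sec Hsub (x_in_sec Hlx)).
Qed.

Lemma x_neq_y : x != y.
Proof.
apply/eqP => Exy'; move: Hyocc; rewrite -Exy' => /(occ_unique Ht occ_x) /(congr1 size).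
by rewrite size_cat /=; lia.
Qed.

Lemma q_neq_x : q != x.
Proof.
have Hlx : lx <= lx <= rx by case/andP: Ha => ? ?; lia.
by apply: contraNneq Hqlx => ->; exact: x_in_sec.
Qed.

Lemma q_neq_y : q != y.
Proof.
apply/eqP => Eqy; move: Hyocc; rewrite -Eqy => /(occ_unique Ht occ_q) /(congr1 size).
by rewrite size_cat /=; lia.
Qed.

Lemma edges_q : e q x /\ e q y.
Proof.
have [K [HK Hx' Hy']] := edge_max_clique e_sym Exy.
have [_ Hq] := max_clique_y HK Hy'; case: HK => HK _.
by split; apply: HK; rewrite ?q_neq_x ?q_neq_y.
Qed.

Variables (lo hi : T -> nat).
Hypotheses (Hmod : interval_model (remove_edge e x y) lo hi) (Hyx : hi y < lo x).
Implicit Types u v w : T.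

Lemma edge_meet u v : e u v -> (u != x) && (v != x) || (u != y) && (v != y) ->
  lo u <= hi v /\ lo v <= hi u.
Proof.
move=> Huv Hp; have Hr : remove_edge e x y u v.
  rewrite /remove_edge Huv /=.
  by apply: contraTN Hp => /orP[]/andP[/eqP-> /eqP->]; rewrite !eqxx /= ?andbF.
by have [_ ? ?] := (Hmod.2 u v).1 Hr.
Qed.

Lemma meet_edge u v : u != v -> lo u <= hi v -> lo v <= hi u -> e u v.
Proof. by move=> Huv H1 H2; have /andP[] := (Hmod.2 u v).2 (And3 Huv H1 H2). Qed.

Lemma q_meet : lo q <= hi y /\ lo x <= hi q.
Proof.
have [Eqx Eqy] := edges_q.
have Hcy : (q != x) && (y != x) || (q != y) && (y != y).
  by rewrite q_neq_x eq_sym x_neq_y.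
have Hcx : (q != x) && (x != x) || (q != y) && (x != y).
  by rewrite q_neq_y x_neq_y orbT.
by split; [case: (edge_meet Eqy Hcy) | case: (edge_meet Eqx Hcx)].
Qed.

Definition trim K := if y \in K then K :\ x else K.

Definition point K := \max_(v in trim K) lo v.

Lemma trim_sub K : trim K \subset K.
Proof. by rewrite /trim; case: ifP => _; [exact: subD1set | exact: subxx]. Qed.

Lemma mem_trim K v : v \in K -> v != x -> v \in trim K.
Proof. by move=> HvK Hvx; rewrite /trim; case: ifP => _; rewrite ?inE ?Hvx. Qed.

Lemma trim_id K : y \notin K -> trim K = K.
Proof. by rewrite /trim => /negbTE ->. Qed.

Lemma trim_pair K u v : u \in trim K -> v \in trim K ->
  (u != x) && (v != x) || (u != y) && (v != y).
Proof.
rewrite /trim; case: ifP => Hy; first by rewrite !inE => /andP[-> _] /andP[-> _].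
by move=> Hu Hv; rewrite orbC; apply/orP; left; apply/andP; split;
  apply: contraFneq Hy => <-.
Qed.

Lemma point_in K w : max_clique e K -> w \in trim K -> lo w <= point K <= hi w.
Proof.
move=> [HK _] Hw; rewrite (leq_bigmax_cond w) //=; apply/bigmax_leqP => v Hv.
have [->|Hvw] := eqVneq v w; first exact: Hmod.1.
have /subsetP HtK := trim_sub K.
by case: (edge_meet (HK v w (HtK v Hv) (HtK w Hw) Hvw) (trim_pair Hv Hw)).
Qed.

Lemma point_mem K v : max_clique e K -> lo v <= point K <= hi v -> v \in K.
Proof.
move=> HK /andP[Hlo Hhi].
have adj w : w \in trim K -> w != v -> e v w.
  move=> Hw Hwv; have /andP[? ?] := point_in HK Hw.
  by apply: meet_edge; rewrite 1?eq_sym //; lia.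
have [Hy|Hy] := boolP (y \in K); last first.
  by apply: (max_clique_adj e_sym HK) => w Hw; apply: adj; rewrite trim_id.
have [->|Hvx] := eqVneq v x; first exact: (max_clique_y HK Hy).1.
have [->//|Hvy] := eqVneq v y.
have Evy : e v y by apply: adj; rewrite 1?eq_sym // mem_trim // eq_sym x_neq_y.
apply: (max_clique_adj e_sym HK) => w Hw Hwv.
have [->|Hwx] := eqVneq w x; last exact: adj (mem_trim Hw Hwx) Hwv.
have [K' [HK' Hv' Hy']] := edge_max_clique e_sym Evy.
have [Hx' _] := max_clique_y HK' Hy'.
by case: HK' => HK' _; apply: HK'.
Qed.

Lemma x_consecutive K1 K2 K3 :
  max_clique e K1 -> max_clique e K2 -> max_clique e K3 ->
  point K1 <= point K2 <= point K3 -> x \in K1 -> x \in K3 -> x \in K2.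
Proof.
move=> HK1 HK2 HK3 /andP[H12 H23] Hx1 Hx3.
have yx : y != x by rewrite eq_sym x_neq_y.
have Hup : point K2 <= hi x.
  have [Hy3|Hy3] := boolP (y \in K3).
    by case/andP: (point_in HK3 (mem_trim Hy3 yx)) => _ ?; have := Hmod.1 x; lia.
  have Hx3' : x \in trim K3 by rewrite trim_id.
  by case/andP: (point_in HK3 Hx3') => _ ?; lia.
have [Hlo|Hlo] := leqP (lo x) (point K2).
  by apply: (point_mem HK2); rewrite Hlo Hup.
have Hy1 : y \in K1.
  apply: contraTT Hlo => Hy1; rewrite -leqNgt.
  have Hx1' : x \in trim K1 by rewrite trim_id.
  by case/andP: (point_in HK1 Hx1') => ? _; lia.
case/andP: (point_in HK1 (mem_trim Hy1 yx)) => Hly _.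
have [Hhy|Hhy] := leqP (point K2) (hi y).
  have Hy2 : y \in K2 by apply: (point_mem HK2); rewrite (leq_trans Hly H12) Hhy.
  exact: (max_clique_y HK2 Hy2).1.
have [Hqy Hxq] := q_meet.
by apply: (max_clique_q HK2); apply: (point_mem HK2); apply/andP; split; lia.
Qed.

Lemma point_consecutive K1 K2 K3 v :
  max_clique e K1 -> max_clique e K2 -> max_clique e K3 ->
  point K1 <= point K2 <= point K3 -> v \in K1 -> v \in K3 -> v \in K2.
Proof.
move=> HK1 HK2 HK3 H123; have [->|Hvx] := eqVneq v x; first exact: x_consecutive.
move=> Hv1 Hv3.
case/andP: (point_in HK1 (mem_trim Hv1 Hvx)) => Hlo _.
case/andP: (point_in HK3 (mem_trim Hv3 Hvx)) => _ Hhi.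
by apply: (point_mem HK2); case/andP: H123 => ? ?; apply/andP; split; lia.
Qed.

Lemma point_order : is_order t (sort (relpre point leq) (leaves t)).
Proof.
case: Ht => _ _ _ [Huniq Hleaves] ->.
set s := sort _ _; have Hmem K : K \in s = (K \in leaves t) by rewrite mem_sort.
split; [by rewrite sort_uniq | by move=> K; rewrite Hmem |].
have Hsorted : sorted (relpre point leq) s.
  by apply: sort_sorted => K1 K2; exact: leq_total.
move=> v i j k Hij Hjk Hk.
have Hj := leq_ltn_trans Hjk Hk; have Hi := leq_ltn_trans Hij Hj.
have Hmc m : m < size s -> max_clique e (nth set0 s m).
  by move=> ?; apply/Hleaves; rewrite -Hmem mem_nth.
have Hle :=
  sorted_leq_nth (fun _ _ _ => @leq_trans _ _ _) (fun _ => leqnn _) set0 Hsorted.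
apply: point_consecutive (Hmc _ Hi) (Hmc _ Hj) (Hmc _ Hk) _.
by rewrite (Hle _ _ Hi Hj Hij) (Hle _ _ Hj Hk Hjk).
Qed.

Lemma point_gt_hi_q K : max_clique e K -> x \in K -> y \notin K -> q \notin K ->
  hi q < point K.
Proof.
move=> HK HxK HyK HqK; have [w [Hw Hwq Hqw]] := max_clique_nonadj e_sym HK HqK.
have [HxK' HwK'] : x \in trim K /\ w \in trim K by rewrite trim_id.
case/andP: (point_in HK HxK') => Hlx _; case/andP: (point_in HK HwK') => Hlw Hhw.
have [Hqy _] := q_meet; rewrite ltnNge; apply: contra Hqw => Hle.
by apply: meet_edge; rewrite 1?eq_sym //; lia.
Qed.

Lemma point_le_hi_q K : max_clique e K -> q \in K -> point K <= hi q.
Proof. by move=> HK HqK; case/andP: (point_in HK (mem_trim HqK q_neq_x)). Qed.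

Lemma clique_at_point_gt i K : max_clique e K -> clique_at t ax secs i K ->
  i != a -> lx <= i <= rx -> q \notin sec secs i -> hi q < point K.
Proof.
move=> HK HKi Hia Hi Hqi; apply: point_gt_hi_q => //.
- by case: HKi => /subsetP HiK _; apply: HiK; exact: x_in_sec.
- by apply: contra Hia => /(clique_at_y HKi) ->.
- by apply: contra Hqi; exact: clique_at_q.
Qed.

Lemma clique_at_point_le j K : max_clique e K -> clique_at t ax secs j K ->
  q \in sec secs j -> point K <= hi q.
Proof. by move=> HK [/subsetP HjK _] Hqj; exact: point_le_hi_q (HjK q Hqj). Qed.

Lemma no_ordered_model : False.
Proof.
have := point_order; set s := sort _ _ => Hs.
have [pre [post [bl [Es Hsz _ Hbl]]]] := qnode_order_blocks Ht Hsub Hs.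
have Htr : transitive (relpre point leq) by move=> ? ? ? /=; exact: leq_trans.
have Hpw : pairwise (relpre point leq) s.
  by rewrite -(sorted_pairwise Htr); apply: sort_sorted => K1 K2; exact: leq_total.
have pick i : i < size secs ->
    exists K, [/\ K \in nth [::] bl i, max_clique e K & clique_at t ax secs i K].
  move=> Hi; case: (Hbl i Hi); case E: (nth [::] bl i) => [//|K X] _ HX.
  exists K; split; [exact: mem_head | | exact: HX (mem_head _ _)].
  have HK : K \in flatten bl.
    by apply/flattenP; exists (K :: X); rewrite ?mem_head // -E mem_nth ?Hsz.
  have : K \in s by case: Es => ->; rewrite !mem_cat ?mem_flatten_rev HK orbT.
  by rewrite mem_sort; case: Ht => _ _ _ [_ ->].
have [l [r [Hlr /andP[Hl Hla] /andP[Har Hr] Hspan]]] := q_span.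
pose j := if l < a then l else a.+1.
have [Hlxj Hjrx Hja] : [/\ lx < j, j < rx & j != a].
  by rewrite /j; case: ifP => ?; split; lia.
have Hqj : q \in sec secs j by apply/Hspan; rewrite /j; [lia | case: ifP => ?; lia].
have [Kj [HKj HmKj HatKj]] := pick j (ltn_trans Hjrx Hrx).
have Hpj := clique_at_point_le HmKj HatKj Hqj.
have [Hlxa Hrxa] : lx != a /\ rx != a by split; lia.
have [Hxlx Hxrx] : lx <= lx <= rx /\ lx <= rx <= rx by split; lia.
have [Hlxj' Hjrx'] : lx < j < size bl /\ j < rx < size bl by rewrite Hsz; split; lia.
case: Es => Es; move: Hpw; rewrite Es => /pairwise_cat_mid Hpw.
  have [Kl [HKl HmKl HatKl]] := pick lx (ltn_trans Hlxj (ltn_trans Hjrx Hrx)).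
  have := clique_at_point_gt HmKl HatKl Hlxa Hxlx Hqlx.
  have /= := pairwise_flatten_nth Hpw Hlxj' HKl HKj.
  lia.
have [Kr [HKr HmKr HatKr]] := pick rx Hrx.
have := clique_at_point_gt HmKr HatKr Hrxa Hxrx Hqrx.
have /= := pairwise_flatten_rev_nth Hpw Hjrx' HKr HKj.
lia.
Qed.

End CentralSection.

Theorem mainTheorem14 (T : finType) (e : rel T) (t : mpq T) (x y q : T)
    (ax rest : seq nat) (secs : seq ({set T} * option (mpq T)))
    (a lx rx : nat) :
  interval_graph e ->
  is_MPQ_tree e t ->
  e x y ->
  (* node(x) is the Q-node at address ax, with sections secs *)
  subtree t ax = Some (QN secs) ->
  occ t ax x ->
  (* x lies exactly in sections lx..rx, i.e. lx = l(x), rx = r(x) *)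
  rx < size secs ->
  (forall i, i < size secs -> (x \in sec secs i <-> lx <= i <= rx)) ->
  (* node(y) lies strictly below node(x), in the subtree T_a *)
  occ t (ax ++ a :: rest) y ->
  (* central section *)
  lx < a < rx ->
  q \in sec secs a -> q \notin sec secs lx -> q \notin sec secs rx ->
  ~ interval_graph (remove_edge e x y).
Proof.
move=> He Ht Exy Hsub _ Hrx Hx Hyocc Ha Hqa Hqlx Hqrx Hrem.
have [lo0 [hi0 Hmod0]] := interval_graph_model He.
have e_sym := interval_model_sym Hmod0.
have Hxy : x != y by apply: contraTneq Exy => ->; rewrite (interval_model_irrefl Hmod0).
have Hnxy : ~~ remove_edge e x y x y by rewrite /remove_edge !eqxx andbF.
have [lo [hi [Hmod Hyx]]] := interval_model_ordered Hrem Hxy Hnxy.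
exact: (no_ordered_model e_sym Ht Exy Hsub Hrx Hx Hyocc Ha Hqa Hqlx Hqrx Hmod Hyx).
Qed.
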